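(* Fix $\widehat\Sigma\subseteq\Sigma$ and a deck $\beta_1,\ldots,\beta_B\in\mathscr{B}$. Let $\sigma\in\Sigma$ satisfy $T^\sigma(\beta_1,\ldots,\beta_B)=T^*(\beta_1,\ldots,\beta_B)$. Let $\mathscr{K}^\sigma_1,\ldots,\mathscr{K}^\sigma_{K^\sigma}$ be the connected components of the graph $\mathscr{G}^\sigma$. For each $k\in\{1,\ldots,K^\sigma\}$ define $\sigma_k:\mathcal{N}\to\mathcal{N}$ by $\sigma_k(i)=\sigma(i)$ if $i\in\mathcal{N}_c$ with $c\in\mathscr{K}^\sigma_k$, and $\sigma_k(i)=i$ otherwise. Then each $\sigma_k$ belongs to $\Sigma$ and satisfies $T^{\sigma_k}(\beta_1,\ldots,\beta_B)=T^*(\beta_1,\ldots,\beta_B)$, and $\bigcup_{k=1}^{K^\sigma}\mathscr{F}(\widehat\Sigma\cup\{\sigma_k\})=\mathscr{F}(\widehat\Sigma\cup\{\sigma\})$.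
   Context: A ballot style consists of contests $\mathcal{C}=\{1,\ldots,C\}$, candidates $\mathcal{N}=\{1,\ldots,N\}$ partitioned into nonempty sets $\mathcal{N}_c$ ($c\in\mathcal{C}$), and positive integers $v_c$. A filled-out ballot is a subset $\beta\subseteq\mathcal{N}$; $\mathscr{B}=\{\beta\subseteq\mathcal{N}: |\mathcal{N}_c\cap\beta|\le v_c\ \forall c\}$. For $i\in\mathcal{N}_c$: $T^*_i(\beta_1,\ldots,\beta_B)=\sum_{b=1}^B\mathbb{I}\{i\in\beta_b\text{ and }|\mathcal{N}_c\cap\beta_b|\le v_c\}$, and for a bijection $\sigma$ of $\mathcal{N}$, $T^\sigma_i(\beta_1,\ldots,\beta_B)=\sum_{b=1}^B\mathbb{I}\{\sigma(i)\in\beta_b\text{ and }|\{\sigma(j)\in\beta_b: j\in\mathcal{N}_c\}|\le v_c\}$. $\Sigma$ is the set of non-identity bijections $\mathcal{N}\to\mathcal{N}$. For $\widehat\Sigma\subseteq\Sigma$, $\mathscr{F}(\widehat\Sigma)$ is the set of all tuples $(\beta_1,\ldots,\beta_{B'})$, over all $B'\in\mathbb{N}$, with each $\beta_b\in\mathscr{B}$ and $T^{\tau}(\beta_1,\ldots,\beta_{B'})\neq T^*(\beta_1,\ldots,\beta_{B'})$ for all $\tau\in\widehat\Sigma$. For $\sigma\in\Sigma$, $\mathscr{G}^\sigma=(\mathscr{V}^\sigma,\mathscr{E}^\sigma)$ is the undirected graph with vertex set $\mathscr{V}^\sigma=\{c\in\mathcal{C}:\exists i\in\mathcal{N}_c,\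 \sigma(i)\neq i\}$ and edge set $\mathscr{E}^\sigma=\{(c,c'): \exists i\in\mathcal{N}_c, i'\in\mathcal{N}_{c'}\text{ with }\sigma(i)=i'\text{ or }\sigma(i')=i\}$. *)

From mathcomp Require Import all_boot all_fingroup.
Set Implicit Arguments. Unset Strict Implicit. Unset Printing Implicit Defensive.

(* Candidates N = 'I_N, contests C = 'I_C.  The partition (N_c)_c is given by
   con : 'I_N -> 'I_C (N_c = con^-1(c)); nonemptiness is a hypothesis.
   A filled-out ballot is a {set 'I_N}; a deck is a seq of ballots. *)

Section Defs.
Variables (N C : nat) (con : 'I_N -> 'I_C) (v : 'I_C -> nat).

Definition valid_ballot (b : {set 'I_N}) : bool :=
  [forall c : 'I_C, #|[set j in b | con j == c]| <= v c].

Definition Tstar (d : seq {set 'I_N}) : {ffun 'I_N -> nat} :=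
  [ffun i => \sum_(b <- d)
     ((i \in b) && (#|[set j in b | con j == con i]| <= v (con i)))%N].

Definition Tsig (f : 'I_N -> 'I_N) (d : seq {set 'I_N}) : {ffun 'I_N -> nat} :=
  [ffun i => \sum_(b <- d)
     ((f i \in b) && (#|[set j | (con j == con i) && (f j \in b)]| <= v (con i)))%N].

Definition inF (S : ('I_N -> 'I_N) -> Prop) (d : seq {set 'I_N}) : Prop :=
  all valid_ballot d /\ (forall f, S f -> Tsig f d <> Tstar d).

Definition addS (Sh : {set {perm 'I_N}}) (f : 'I_N -> 'I_N) : ('I_N -> 'I_N) -> Prop :=
  fun g => (exists2 t, t \in Sh & g =1 t) \/ g =1 f.

Definition Gvert (s : {perm 'I_N}) : {set 'I_C} :=
  [set c | [exists i, (con i == c) && (s i != i)]].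

Definition Gedge (s : {perm 'I_N}) : rel 'I_C :=
  fun c c' => [exists i, exists i',
    [&& con i == c, con i' == c' & (s i == i') || (s i' == i)]].

Definition Gadj (s : {perm 'I_N}) : rel 'I_C :=
  fun c c' => [&& c \in Gvert s, c' \in Gvert s & Gedge s c c'].

Definition comp (s : {perm 'I_N}) (c : 'I_C) : {set 'I_C} :=
  [set c' | (c' \in Gvert s) && connect (Gadj s) c c'].

Definition components (s : {perm 'I_N}) : {set {set 'I_C}} :=
  [set comp s c | c in Gvert s].

Definition sigmaK (s : {perm 'I_N}) (K : {set 'I_C}) : 'I_N -> 'I_N :=
  fun i => if con i \in K then s i else i.

End Defs.

From Pilot Require Import Defs.
From mathcomp Require Import all_boot all_fingroup.
Set Implicit Arguments. Unset Strict Implicit. Unset Printing Implicit Defensive.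

(* The tally T^f_i only looks at f on the contest of i
   ("locality"), and T^id = T^*.  Hence T^{sigma_K} agrees with T^sigma on
   the candidates of contests in the component K and with T^* elsewhere,
   while T^sigma itself agrees with T^* outside the vertices of G^sigma.
   A component is closed under adjacency, so sigma maps the candidates of K
   into candidates of K; this makes sigma_K injective, and it moves some
   candidate because K contains a vertex.  Consequently T^sigma <> T^* iff
   T^{sigma_K} <> T^* for some component K (the component of a contest
   where the tallies differ).  Finally membership in F(Sh u {f}) is
   "valid, distinguishes every t in Sh, and T^f <> T^*", so the union
   formula for F is exactly this decomposition. *)

Section Tallies.
Variables (N C : nat) (con : 'I_N -> 'I_C) (v : 'I_C -> nat).

Lemma Tsig_local (f g : 'I_N -> 'I_N) d i :
  (forall j, con j = con i -> f j = g j) -> Tsig con v f d i = Tsig con v g d i.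
Proof.
move=> fg; rewrite !ffunE; apply: eq_bigr => b _.
rewrite (fg i erefl); congr (_ && (_ <= _)).
by apply: eq_card => j; rewrite !inE; case: eqP => //= /fg ->.
Qed.

Lemma Tsig_id d : Tsig con v id d = Tstar con v d.
Proof.
apply/ffunP => i; rewrite !ffunE; apply: eq_bigr => b _.
by congr (_ && (_ <= _)); apply: eq_card => j; rewrite !inE andbC.
Qed.

Lemma Tsig_ext (f g : 'I_N -> 'I_N) d : f =1 g -> Tsig con v f d = Tsig con v g d.
Proof. by move=> fg; apply/ffunP => i; apply: Tsig_local => j _; apply: fg. Qed.

(* Outside the vertices of G^sigma, sigma is the identity on the contest. *)
Lemma Tsig_off_vertices (s : {perm 'I_N}) d i :
  con i \notin Gvert con s -> Tsig con v s d i = Tstar con v d i.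
Proof.
move=> iNv; rewrite -Tsig_id; apply: Tsig_local => j ji.
apply/eqP; apply: contraNT iNv => sj; rewrite inE; apply/existsP; exists j.
by rewrite ji eqxx.
Qed.

Lemma Tsig_sigmaK (s : {perm 'I_N}) K d i :
  Tsig con v (sigmaK con s K) d i =
  if con i \in K then Tsig con v s d i else Tstar con v d i.
Proof.
rewrite -Tsig_id; case: ifP => iK; apply: Tsig_local => j ji;
  by rewrite /sigmaK ji iK.
Qed.

Lemma Tsig_sigmaK_eq (s : {perm 'I_N}) K d :
  Tsig con v s d = Tstar con v d -> Tsig con v (sigmaK con s K) d = Tstar con v d.
Proof. by move=> sT; apply/ffunP => i; rewrite Tsig_sigmaK sT; case: ifP. Qed.

End Tallies.

Section Components.
Variables (N C : nat) (con : 'I_N -> 'I_C) (s : {perm 'I_N}).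

Local Notation K c0 := (Defs.comp con s c0).

Lemma comp_self c : c \in Gvert con s -> c \in K c.
Proof. by move=> cv; rewrite [c \in _]inE cv connect0. Qed.

Lemma comp_vertex c0 c : c \in K c0 -> c \in Gvert con s.
Proof. by rewrite [c \in _]inE => /andP []. Qed.

Lemma comp_adj_closed c0 c c' : c \in K c0 -> Gadj con s c c' -> c' \in K c0.
Proof.
rewrite [c \in _]inE => /andP [_ c0c] cc'.
have c'v : c' \in Gvert con s by case/and3P: cc'.
by rewrite [c' \in _]inE c'v (connect_trans c0c (connect1 cc')).
Qed.

Lemma comp_perm_closed c0 i : con i \in K c0 -> con (s i) \in K c0.
Proof.
move=> iK; have [->|sii] := eqVneq (s i) i; first exact: iK.
have siv : con (s i) \in Gvert con s.
  rewrite inE; apply/existsP; exists (s i); rewrite eqxx /=.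
  by rewrite (inj_eq perm_inj).
apply: (comp_adj_closed iK); rewrite /Gadj (comp_vertex iK) siv /=.
by apply/existsP; exists i; apply/existsP; exists (s i); rewrite !eqxx.
Qed.

(* Hence sigma_K is injective: it never sends a candidate of K outside K. *)
Lemma sigmaK_inj c0 : injective (sigmaK con s (K c0)).
Proof.
move=> i j; rewrite /sigmaK.
case iK: (con i \in K c0); case jK: (con j \in K c0) => //=.
- exact: perm_inj.
- by move=> sij; move: (comp_perm_closed iK); rewrite sij jK.
- by move=> jsj; move: (comp_perm_closed jK); rewrite -jsj iK.
Qed.

Lemma sigmaK_nontrivial c : c \in Gvert con s ->
  exists i, sigmaK con s (K c) i != i.
Proof.
move=> cv; have := cv; rewrite inE => /existsP [i /andP [/eqP ic sii]].
by exists i; rewrite /sigmaK ic comp_self.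
Qed.

End Components.

Section Decomposition.
Variables (N C : nat) (con : 'I_N -> 'I_C) (v : 'I_C -> nat).

Lemma Tsig_neq_components (s : {perm 'I_N}) d :
  Tsig con v s d <> Tstar con v d <->
  exists2 K, K \in components con s & Tsig con v (sigmaK con s K) d <> Tstar con v d.
Proof.
split; last by case=> K _ KT sT; apply/KT/Tsig_sigmaK_eq.
move=> sT.
have [i sTi] : exists i, Tsig con v s d i != Tstar con v d i.
  apply/existsP; apply: contra_notT sT => /existsPn sTeq.
  by apply/ffunP => i; apply/eqP; rewrite -[_ == _]negbK sTeq.
have iv : con i \in Gvert con s by apply: contraNT sTi => /Tsig_off_vertices ->.
exists (Defs.comp con s (con i)); first exact: imset_f.
by move/ffunP/(_ i); rewrite Tsig_sigmaK comp_self //; apply/eqP.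
Qed.

Lemma inF_addS (Sh : {set {perm 'I_N}}) f d :
  inF con v (addS Sh f) d <->
  [/\ all (valid_ballot con v) d,
      forall t, t \in Sh -> Tsig con v t d <> Tstar con v d
    & Tsig con v f d <> Tstar con v d].
Proof.
split.
  by case=> dval dF; split=> // [t tSh|]; apply: dF; [left; exists t | right].
case=> dval dSh df; split=> // g [[t tSh gt]|gf].
  by rewrite (Tsig_ext con v d gt); apply: dSh.
by rewrite (Tsig_ext con v d gf).
Qed.

End Decomposition.

Theorem theorem2 (N C : nat) (con : 'I_N -> 'I_C) (v : 'I_C -> nat)
  (Hcon : forall c : 'I_C, exists i : 'I_N, con i = c)
  (Hv : forall c : 'I_C, 0 < v c)
  (Sh : {set {perm 'I_N}}) (HSh : 1%g \notin Sh)
  (d : seq {set 'I_N}) (Hd : all (valid_ballot con v) d)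
  (s : {perm 'I_N}) (Hs : s != 1%g)
  (HT : Tsig con v s d = Tstar con v d) :
  (forall K, K \in components con s ->
     [/\ injective (sigmaK con s K), (exists i, sigmaK con s K i != i)
       & Tsig con v (sigmaK con s K) d = Tstar con v d])
  /\
  (forall d' : seq {set 'I_N},
     (exists2 K, K \in components con s & inF con v (addS Sh (sigmaK con s K)) d')
     <-> inF con v (addS Sh s) d').
Proof.
split.
  move=> _ /imsetP [c cv ->]; split.
  - exact: sigmaK_inj.
  - exact: sigmaK_nontrivial.
  - exact: Tsig_sigmaK_eq.
move=> d'; split.
  case=> K KC /inF_addS [d'val d'Sh KT]; apply/inF_addS; split=> //.
  by apply/Tsig_neq_components; exists K.
case/inF_addS=> d'val d'Sh /Tsig_neq_components [K KC KT].
by exists K => //; apply/inF_addS.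
Qed.
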